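(* Let $T$ be a tree on $n$ vertices, with vertex set $\{1,\dots,n\}$ and distance matrix $D$, and let $1$ be a fixed vertex. Let $R(T)=2(n-1)\mathbf{1}^\top D e_1-\mathbf{1}^\top D\mathbf{1}$. Then $$R(T)=4\sum_{1\le a<b\le n} d_{1,P_{a,b}}$$ and $$0\le R(T)\le \tfrac{2}{3}n(n-1)(n-2).$$ The upper bound is achieved if and only if $T$ is the path $P_n$ and vertex $1$ is one of its end vertices; the lower bound is achieved if and only if $T$ is a star and vertex $1$ is its centre.
   Context: $\mathbf{1}$ is the all-ones vector and $e_1$ the first standard basis vector (corresponding to vertex $1$), so $\mathbf{1}^\top De_1=\sum_u d_{u,1}$. $P_{a,b}$ is the unique path in $T$ between $a$ and $b$, and $d_{1,P_{a,b}}$ is the distance from vertex $1$ to the vertex of $P_{a,b}$ closest to it. *)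

From mathcomp Require Import all_boot all_order all_algebra.
Set Implicit Arguments. Unset Strict Implicit. Unset Printing Implicit Defensive.
Import Order.TTheory GRing.Theory Num.Theory.

(* A simple graph on a finite vertex type T is a symmetric irreflexive
   relation e : rel T. *)
Section Graphs.
Variable T : finType.
Variable e : rel T.

Definition walk_len (k : nat) (x y : T) : bool :=
  [exists p : k.-tuple T, path e x p && (last x p == y)].

(* graph distance: the least length of a walk from x to y
   (walks shorter than #|T| suffice in a connected graph) *)
Definition dist (x y : T) : nat :=
  \big[minn/#|T|]_(k < #|T| | walk_len k x y) k.

Definition acyclic : Prop :=
  ~ exists c : seq T, [/\ 2 < size c, uniq c & cycle e c].

Definition connected : Prop := forall x y : T, connect e x y.

Definition is_tree : Prop := connected /\ acyclic.

(* v lies on a (simple) path from a to b; in a tree this path is unique,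
   so this is the vertex set of P_{a,b} *)
Definition on_path (a b v : T) : bool :=
  [exists k : 'I_#|T|, exists p : k.-tuple T,
     [&& path e a p, last a p == b, uniq (a :: p) & v \in a :: p]].

Definition dist_to_path (r a b : T) : nat :=
  \big[minn/#|T|]_(v | on_path a b v) dist r v.

Definition is_path_with_end (r : T) : Prop :=
  exists s : seq T, [/\ perm_eq s (enum T), head r s = r &
    forall x y : T, e x y <->
      exists i, i.+1 < size s /\
        ((nth r s i = x /\ nth r s i.+1 = y) \/ (nth r s i = y /\ nth r s i.+1 = x))].

Definition is_star_centre (r : T) : Prop :=
  forall x y : T, e x y = ((x == r) != (y == r)).
End Graphs.

Definition Rval (n : nat) (e : rel 'I_n) (r : 'I_n) : int :=
  ((2 * (n - 1))%N%:Z * (\sum_(u : 'I_n) dist e u r)%N%:Z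
   - (\sum_(u : 'I_n) \sum_(v : 'I_n) dist e u v)%N%:Z)%R.

(* Root the tree at r and let anc v be the vertex set of the path from v to r.
   Then d(a,b) = |anc a (+) anc b| (symmetric difference) and
   d_{r,P_{a,b}} = |anc a /\ anc b| - 1, so that
   2 d_{r,P_{a,b}} + d(a,b) = d(a,r) + d(b,r); summing over all pairs gives
   R(T) = 2 sum_{a <> b} d_{r,P_{a,b}} = 4 sum_{a<b} d_{r,P_{a,b}}.
   For a <> b, d_{r,P_{a,b}} plus one if a and b are incomparable for the
   ancestor order equals the number of common ancestors of a and b other than
   a and b.  Of three distinct vertices at most one is a common ancestor of the
   other two, and exactly one when they lie on a common root path.  Counting
   triples thus gives 3 sum_{a <> b} d_{r,P_{a,b}} <= n(n-1)(n-2), with equality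
   iff any two vertices are comparable, i.e. iff depth is injective, i.e. iff T
   is a path ending at r.  Finally R(T) = 0 iff every a <> b have r as their
   only common ancestor, i.e. iff every vertex other than r is adjacent to r. *)

From Pilot Require Import Defs.
From mathcomp Require Import all_boot all_order all_algebra zify.
Set Implicit Arguments. Unset Strict Implicit. Unset Printing Implicit Defensive.
Import Order.TTheory GRing.Theory Num.Theory.

Section TreeDistance.
Variables (T : finType) (e : rel T).
Hypotheses (esym : symmetric e) (econn : connected e).
Local Notation dist := (dist e).

Lemma walk_lenP k x y :
  reflect (exists p, [/\ size p = k, path e x p & last x p = y]) (walk_len e k x y).
Proof.
apply: (iffP existsP) => [[p /andP[pp /eqP pl]] | [p [sp pp pl]]].
  by exists (val p); rewrite size_tuple.
have sp' : size p == k by rewrite sp.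
by exists (Tuple sp'); rewrite /= pp pl eqxx.
Qed.

Lemma dist_le_walk k x y : walk_len e k x y -> dist x y <= k.
Proof.
move=> w; case: (ltnP k #|T|) => kN.
  exact: (@bigmin_le_cond _ nat _ _ (Ordinal kN)).
apply: leq_trans kN; exact: (@bigmin_le_id _ nat).
Qed.

Lemma size_uniq_path (x : T) p : uniq (x :: p) -> size p < #|T|.
Proof. by move/card_uniqP => /= <-; apply: max_card. Qed.

Lemma dist_walk x y : dist x y < #|T| /\ walk_len e (dist x y) x y.
Proof.
have [p pxp ->] := connectP (econn x y).
case: (shortenP pxp) => q pxq uq _.
have lt_qN := size_uniq_path uq.
have : dist x (last x q) <= size q by apply/dist_le_walk/walk_lenP; exists q.
rewrite /Defs.dist; elim/big_ind: _ => [|a b|//]; first by rewrite leqNgt lt_qN.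
by rewrite /minn; case: ifP.
Qed.

Lemma dist_lt_card x y : dist x y < #|T|.
Proof. by case: (dist_walk x y). Qed.

Lemma dist_xx x : dist x x = 0.
Proof. by apply/eqP; rewrite -leqn0; apply/dist_le_walk/walk_lenP; exists [::]. Qed.

Lemma dist_eq0 x y : dist x y = 0 -> x = y.
Proof.
move=> dxy; have [_ /walk_lenP [p [sp _ <-]]] := dist_walk x y.
by move: sp; rewrite dxy; case: p.
Qed.

Lemma walk_len_sym k x y : walk_len e k x y -> walk_len e k y x.
Proof.
move=> /walk_lenP [p [sp pp pl]]; apply/walk_lenP.
exists (rev (belast x p)); split.
- by rewrite size_rev size_belast.
- by rewrite -pl rev_path; apply: sub_path pp => a b; rewrite esym.
- by case: p {sp pp} pl => [|a p] /= pl; [rewrite pl | rewrite rev_cons last_rcons].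
Qed.

Lemma dist_sym x y : dist x y = dist y x.
Proof.
by apply/eqP; rewrite eqn_leq !dist_le_walk // walk_len_sym // (dist_walk _ _).2.
Qed.

Lemma dist_edge x y z : e x y -> dist x z <= (dist y z).+1.
Proof.
move=> exy; have /walk_lenP [p [sp pp pl]] := (dist_walk y z).2.
by apply/dist_le_walk/walk_lenP; exists (y :: p); rewrite /= exy sp pp.
Qed.

End TreeDistance.

Section SymDiff.
Variable T : finType.
Implicit Types (A B : {set T}) (a : T).

Definition symdiff A B := (A :\: B) :|: (B :\: A).

Lemma symdiffC A B : symdiff A B = symdiff B A.
Proof. by rewrite /symdiff setUC. Qed.

Lemma symdiffv A : symdiff A A = set0.
Proof. by rewrite /symdiff setDv setU0. Qed.

Lemma card_symdiff_step A A' B a : A \subset a |: A' -> A' \subset a |: A ->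
  #|symdiff A B| <= (#|symdiff A' B|).+1.
Proof.
move=> /subsetP sAA' /subsetP sA'A.
have : symdiff A B \subset a |: symdiff A' B.
  apply/subsetP => x; move: (sAA' x) (sA'A x); rewrite !inE.
  by case: (x == a); case: (x \in A); case: (x \in A'); case: (x \in B).
by move/subset_leq_card/leq_trans; apply; rewrite cardsU1; case: (_ \notin _).
Qed.

Lemma card_symdiffU1 A B b : b \notin A -> b \notin B ->
  #|symdiff A (b |: B)| = (#|symdiff A B|).+1.
Proof.
move=> bA bB; have -> : symdiff A (b |: B) = b |: symdiff A B.
  by apply/setP => x; rewrite !inE; case: (eqVneq x b) => [->|]; rewrite ?(negbTE bA).
by rewrite cardsU1 !inE (negbTE bA) (negbTE bB).
Qed.

Lemma card_symdiff A B : #|symdiff A B| + 2 * #|A :&: B| = #|A| + #|B|.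
Proof.
have disj : (A :\: B) :&: (B :\: A) = set0.
  by apply/setP => x; rewrite !inE; case: (x \in A); case: (x \in B).
rewrite /symdiff cardsU disj cards0 subn0 -(cardsID B A) -(cardsID A B) setIC; lia.
Qed.

End SymDiff.

Section FiniteSums.
Variable T : finType.

Lemma sum3_rot (F : T -> T -> T -> nat) :
  \sum_x \sum_y \sum_z F z x y = \sum_x \sum_y \sum_z F x y z.
Proof.
rewrite (eq_bigr (fun x => \sum_z \sum_y F z x y)) => [|x _]; last exact: exchange_big.
exact: exchange_big.
Qed.

Lemma sum3_perm3 (F : T -> T -> T -> nat) :
  \sum_x \sum_y \sum_z (F x y z + F y x z + F z x y) = 3 * \sum_x \sum_y \sum_z F x y z.
Proof.
under eq_bigr do under eq_bigr do rewrite !big_split /=.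
under eq_bigr do rewrite !big_split /=.
rewrite !big_split /= [X in _ + _ + X]sum3_rot [X in _ + X + _]exchange_big /=.
by rewrite mulSn mul2n -addnn addnA.
Qed.

Lemma sum_mem_card (A : {set T}) : \sum_x (x \in A : nat) = #|A|.
Proof. by rewrite -sum1_card [RHS]big_mkcond. Qed.

Lemma sum_uniq3 :
  \sum_(x : T) \sum_(y : T) \sum_(z : T) (uniq [:: x; y; z] : nat) =
    #|T| * (#|T| - 1) * (#|T| - 2).
Proof.
have row (x y : T) : \sum_z (uniq [:: x; y; z] : nat) = (x != y) * (#|T| - 2).
  case: (eqVneq x y) => [<-|xy]; first by rewrite big1 // => z _; rewrite /= inE eqxx.
  rewrite (eq_bigr (fun z : T => (z \in ~: [set x; y] : nat))) => [|z _]; last first.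
    by rewrite /= !inE !negb_or xy /= andbT !(eq_sym z).
  by rewrite sum_mem_card -(cardsC [set x; y]) cards2 xy /= mul1n addKn.
under eq_bigr do under eq_bigr do rewrite row.
have col (x : T) : \sum_y (x != y : nat) = #|T| - 1.
  rewrite (eq_bigr (fun y : T => (y \in [set~ x] : nat))) => [|y _].
    by rewrite sum_mem_card cardsC1 subn1.
  by rewrite !inE eq_sym.
under eq_bigr do rewrite -big_distrl /= col.
by rewrite sum_nat_const mulnA.
Qed.

Lemma sum_offdiag_eq0 (F : T -> T -> nat) :
  \sum_a \sum_(b | a != b) F a b = 0 <-> forall a b, a != b -> F a b = 0.
Proof.
split=> [/eqP + a b ab | F0]; last by rewrite big1 // => a _; rewrite big1 // => b /F0.
rewrite sum_nat_eq0 => /forallP /(_ a) /=; rewrite sum_nat_eq0 => /forallP /(_ b).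
by rewrite ab => /eqP.
Qed.

End FiniteSums.

Lemma sum_pairs_ord n (g : 'I_n -> 'I_n -> nat) : (forall a b, g a b = g b a) ->
  \sum_(a < n) \sum_(b < n | a != b) g a b = 2 * \sum_(a < n) \sum_(b < n | a < b) g a b.
Proof.
move=> gC.
have split_row (a : 'I_n) : \sum_(b < n | a != b) g a b =
    \sum_(b < n | a < b) g a b + \sum_(b < n | b < a) g a b.
  rewrite (bigID (fun b : 'I_n => a < b)) /=.
  by congr (_ + _); apply: eq_bigl => b; rewrite -val_eqE neq_ltn; case: ltngtP.
under eq_bigr do rewrite split_row.
rewrite big_split /= mul2n -addnn; congr (_ + _).
rewrite (exchange_big_dep xpredT) //=; apply: eq_bigr => a _; apply: eq_bigr => b _; exact: gC.
Qed.

Section RootedTree.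
Variables (T : finType) (e : rel T).
Hypotheses (esym : symmetric e) (eirr : irreflexive e) (etree : is_tree e).
Variable r : T.
Local Notation dist := (dist e).
Let econn : connected e := etree.1.

Lemma acyclic_bypass (e' : rel T) x y :
  e x y -> subrel e' e -> ~~ e' x y -> ~ connect e' x y.
Proof.
move=> exy se' ne'xy /connectP [p pp]; case: (shortenP pp) => q pq uq _ yq.
apply: etree.2; exists (x :: q); split => //.
  case: q yq pq {uq} => [|u [|v q]] //= yq; first by rewrite yq eirr in exy.
  by rewrite -yq andbT (negbTE ne'xy).
by rewrite /cycle rcons_path (sub_path se' pq) -yq esym.
Qed.

Definition depth v := dist v r.

Definition parent v :=
  if [pick u | e v u && ((depth u).+1 == depth v)] is Some u then u else v.

Lemma depth_eq0 v : depth v = 0 -> v = r.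
Proof. exact: dist_eq0. Qed.

Lemma depth_root : depth r = 0.
Proof. exact: dist_xx. Qed.

Lemma parent_spec v : v != r -> e v (parent v) /\ (depth (parent v)).+1 = depth v.
Proof.
move=> vr; rewrite /parent; case: pickP => [u /andP[evu /eqP] //|none]; exfalso.
have [_ /walk_lenP [[|u p] [sp pp pl]]] := dist_walk econn v r.
  by move: vr; rewrite -pl eqxx.
move: pp => /= /andP[evu pp].
have hu : depth u <= (depth v).-1.
  by apply/dist_le_walk/walk_lenP; exists p; rewrite /depth -sp.
have := dist_edge econn r evu; have := none u; move: hu.
by rewrite evu /depth -sp /= => ? ? /eqP; lia.
Qed.

Lemma parent_root : parent r = r.
Proof. by rewrite /parent; case: pickP => [u /andP[_ /eqP]|//]; rewrite depth_root. Qed.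

Lemma depth_parent v : depth (parent v) = (depth v).-1.
Proof.
case: (eqVneq v r) => [->|vr]; first by rewrite parent_root depth_root.
by have [_ <-] := parent_spec vr.
Qed.

Lemma depth_iter_parent k v : depth (iter k parent v) = depth v - k.
Proof. by elim: k => [|k IH]; rewrite ?subn0 //= depth_parent IH subnS. Qed.

Lemma iter_parent_root k v : depth v <= k -> iter k parent v = r.
Proof.
by move=> hk; apply: depth_eq0; rewrite depth_iter_parent; apply/eqP; rewrite subn_eq0.
Qed.

Lemma connect_root (e' : rel T) :
  (forall u, u != r -> e' u (parent u)) -> forall w, connect e' w r.
Proof.
move=> e'par w; elim: {w}(depth w) {-2}w (erefl (depth w)) => [|k IH] w dw.
  by rewrite (depth_eq0 dw) connect0.
have wr : w != r by apply: contra_eqN dw => /eqP ->; rewrite depth_root.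
apply: connect_trans (connect1 (e'par w wr)) (IH _ _).
by rewrite depth_parent dw.
Qed.

(* Locked so that [inE] does not unfold membership in an ancestor set. *)
Definition ancestors v : {set T} :=
  locked [set u | [exists i : 'I_#|T|, iter i parent v == u]].

Local Notation anc := ancestors.

Lemma ancestorsP u v : reflect (exists k, iter k parent v = u) (u \in anc v).
Proof.
rewrite /anc -lock inE; apply: (iffP existsP) => [[i /eqP <-]|[k <-]]; first by exists i.
case: (ltnP k #|T|) => kN; first by exists (Ordinal kN).
have hN : depth v < #|T| := dist_lt_card econn v r.
by exists (Ordinal hN); rewrite /= !iter_parent_root // (leq_trans (ltnW hN)).
Qed.

Lemma ancestors_refl v : v \in anc v.
Proof. by apply/ancestorsP; exists 0. Qed.

Lemma root_ancestors v : r \in anc v.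
Proof. by apply/ancestorsP; exists (depth v); rewrite iter_parent_root. Qed.

Lemma leq_depth_ancestor u v : u \in anc v -> depth u <= depth v.
Proof. by case/ancestorsP => k <-; rewrite depth_iter_parent leq_subr. Qed.

Lemma ancestors_depth_inj u v : u \in anc v -> depth u = depth v -> u = v.
Proof.
case/ancestorsP => [[|k] <-] //; rewrite depth_iter_parent => dv.
have dv0 : depth v = 0 by lia.
by rewrite iter_parent_root ?dv0 // (depth_eq0 dv0).
Qed.

Lemma ancestors_trans u v w : u \in anc v -> v \in anc w -> u \in anc w.
Proof.
by case/ancestorsP => k <- /ancestorsP [l <-]; apply/ancestorsP; exists (k + l); rewrite iterD.
Qed.

Lemma ancestors_antisym u v : u \in anc v -> v \in anc u -> u = v.
Proof.
move=> uv vu; apply: (ancestors_depth_inj uv); apply/eqP.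
by rewrite eqn_leq !leq_depth_ancestor.
Qed.

Lemma ancestors_asym u v : u != v -> (u \in anc v) && (v \in anc u) = false.
Proof. by apply: contraNF => /andP[uv vu]; rewrite (ancestors_antisym uv vu). Qed.

Lemma ancestors_parent v : v != r -> anc v = v |: anc (parent v).
Proof.
move=> vr; apply/setP => u; rewrite in_setU1; apply/ancestorsP/idP.
  case=> [[|k] <-]; first by rewrite eqxx.
  by rewrite iterSr; apply/orP; right; apply/ancestorsP; exists k.
case/orP => [/eqP ->|/ancestorsP [k <-]]; first by exists 0.
by exists k.+1; rewrite iterSr.
Qed.

Lemma parent_notin_ancestors v : v != r -> v \notin anc (parent v).
Proof.
move=> vr; apply/negP => /leq_depth_ancestor; rewrite depth_parent.
by have [_ <-] := parent_spec vr; rewrite ltnn.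
Qed.

Lemma ancestors_root : anc r = [set r].
Proof.
apply/setP => u; rewrite in_set1; apply/idP/eqP => [|->]; last exact: ancestors_refl.
by move/leq_depth_ancestor; rewrite depth_root leqn0 => /eqP /depth_eq0.
Qed.

Lemma card_ancestors v : #|anc v| = (depth v).+1.
Proof.
elim: {v}(depth v) {-2}v (erefl (depth v)) => [|k IH] v dv.
  by rewrite dv (depth_eq0 dv) ancestors_root cards1.
have vr : v != r by apply: contra_eqN dv => /eqP ->; rewrite depth_root.
have dp : depth (parent v) = k by rewrite depth_parent dv.
by rewrite (ancestors_parent vr) cardsU1 parent_notin_ancestors // IH // dp dv.
Qed.

Lemma edge_parent x y : e x y -> x = parent y \/ y = parent x.
Proof.
move=> exy; case: (eqVneq x (parent y)) => [|xpy]; first by left.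
case: (eqVneq y (parent x)) => [|ypx]; first by right.
pose e' := [rel u v | e u v && ~~ [|| (u == x) && (v == y) | (u == y) && (v == x)]].
have e'sym : connect_sym e'.
  by apply: sym_connect_sym => u v /=; rewrite esym orbC (andbC (v == y)) (andbC (v == x)).
have e'root : forall u, u != r -> e' u (parent u).
  move=> u ur; have [eup _] := parent_spec ur; rewrite /= eup /=.
  by apply/norP; split; apply/andP => -[/eqP uxy /eqP pu];
    [move: ypx | move: xpy]; rewrite -pu uxy eqxx.
exfalso; apply: (acyclic_bypass (e' := e') exy).
- by move=> u v /andP[].
- by rewrite /= !eqxx andbF.
- by apply: connect_trans (connect_root e'root x) _; rewrite e'sym connect_root.
Qed.

Lemma edge_parent_nonroot x y : e x y -> x = parent y -> y != r.
Proof. by move=> exy xy; apply: contraTneq exy => yr; rewrite xy yr parent_root eirr. Qed.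

Lemma ancestors_edge x y : e x y ->
  (anc y = y |: anc x /\ y \notin anc x) \/ (anc x = x |: anc y /\ x \notin anc y).
Proof.
move=> exy; case: (edge_parent exy) => xy.
  have yr := edge_parent_nonroot exy xy.
  by left; rewrite xy (ancestors_parent yr) parent_notin_ancestors.
have xr : x != r by apply: edge_parent_nonroot xy; rewrite esym.
by right; rewrite xy (ancestors_parent xr) parent_notin_ancestors.
Qed.

Lemma card_symdiff_edge x y B : e x y ->
  #|symdiff (anc x) B| <= (#|symdiff (anc y) B|).+1.
Proof.
case/ancestors_edge => [[-> _]|[-> _]].
  by apply: (@card_symdiff_step _ _ _ _ y); rewrite ?setUA ?setUid ?subsetUr.
by apply: (@card_symdiff_step _ _ _ _ x); rewrite ?setUA ?setUid ?subsetUr.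
Qed.

Lemma card_symdiff_path x p :
  path e x p -> #|symdiff (anc x) (anc (last x p))| <= size p.
Proof.
elim: p x => [|y p IH] x /=; first by rewrite symdiffv cards0.
by case/andP=> exy /IH hp; apply: leq_trans (card_symdiff_edge _ exy) _.
Qed.

Lemma dist_le_symdiff a b : dist a b <= #|symdiff (anc a) (anc b)|.
Proof.
elim: {a b}(depth a + depth b) {-2}a {-2}b (leqnn (depth a + depth b)) => [|k IH] a b.
  by rewrite leqn0 addn_eq0 => /andP[/eqP/depth_eq0 -> /eqP/depth_eq0 ->]; rewrite dist_xx.
wlog ab : a b / a \notin anc b.
  move=> W hk; case: (boolP (a \in anc b)) => [ab|nab]; last exact: W.
  case: (boolP (b \in anc a)) => [ba|nba]; first by rewrite (ancestors_antisym ab ba) dist_xx.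
  by rewrite dist_sym // symdiffC; apply: W; rewrite // addnC.
move=> hk; have ar : a != r by apply: contraNneq ab => ->; apply: root_ancestors.
have [eap dp] := parent_spec ar.
rewrite (ancestors_parent ar) symdiffC card_symdiffU1 ?parent_notin_ancestors // symdiffC.
apply: leq_trans (dist_edge econn b eap) _; rewrite ltnS IH //; lia.
Qed.

Lemma dist_ancestors a b : dist a b = #|symdiff (anc a) (anc b)|.
Proof.
apply/eqP; rewrite eqn_leq dist_le_symdiff /=.
have /walk_lenP [p [<- pp <-]] := (dist_walk econn a b).2.
exact: card_symdiff_path.
Qed.

Lemma dist_rootl v : dist r v = depth v.
Proof. exact: dist_sym. Qed.

Lemma ancestors_edge_boundary x y c : e x y ->
  (c \in anc x) != (c \in anc y) -> (c == x) || (c == y).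
Proof.
case/ancestors_edge => [[-> _]|[-> _]]; rewrite !in_setU1;
  by case: (c == x); case: (c == y); case: (c \in anc _).
Qed.

Lemma path_boundary x p c : path e x p ->
  (c \in anc x) != (c \in anc (last x p)) -> c \in x :: p.
Proof.
elim: p x => [|y p IH] x /=; first by rewrite eqxx.
case/andP=> exy pyp cxp; case: (boolP ((c \in anc x) != (c \in anc y))).
  by case/(ancestors_edge_boundary exy)/orP => /eqP ->; rewrite !inE eqxx ?orbT.
by rewrite negbK => /eqP cxy; rewrite inE IH ?orbT // -cxy.
Qed.

Lemma on_path_ancestors a b v : on_path e a b v -> anc a :&: anc b \subset anc v.
Proof.
case/existsP => k /existsP [p /and4P [pp /eqP pb up vp]].
apply/subsetP => c; rewrite inE => /andP[ca cb]; apply/negPn/negP => cv.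
have cnv : c != v by apply: contraNneq cv => ->; apply: ancestors_refl.
case/splitPl: vp pp pb up => p1 p2 vp1; rewrite cat_path last_cat vp1 => /andP[pp1 pp2] pb.
have c1 : c \in a :: p1 by apply: (path_boundary pp1); rewrite vp1 ca (negbTE cv).
have c2 : c \in p2.
  have : c \in v :: p2 by apply: (path_boundary pp2); rewrite pb cb (negbTE cv).
  by rewrite inE (negbTE cnv).
by rewrite -cat_cons cat_uniq => /and3P[_ /hasP[]]; exists c.
Qed.

Lemma path_low_vertex x p : path e x p ->
  exists2 w, w \in x :: p & anc w \subset anc x :&: anc (last x p).
Proof.
elim: p x => [|y p IH] x /=; first by exists x; rewrite ?mem_head ?setIid.
case/andP => exy /IH [w wp]; set b := last y p => sw.
case: (boolP (x \in anc b)) => xb.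
  exists x; first exact: mem_head.
  by rewrite subsetI subxx; apply/subsetP => c /ancestors_trans; apply.
exists w; first by rewrite inE wp orbT.
have swb : anc w \subset anc b by apply: subset_trans sw (subsetIr _ _).
rewrite subsetI swb andbT.
apply/subsetP => c cw; have /setIP[cy cb] := subsetP sw c cw.
case: (ancestors_edge exy) => [[ay _]|[ax _]]; last by rewrite ax in_setU1 cy orbT.
move: cy; rewrite ay in_setU1 => /orP[/eqP cy|//].
have xy : x \in anc y by rewrite ay in_setU1 ancestors_refl orbT.
by move: xb; rewrite (ancestors_trans xy) // -cy.
Qed.

Lemma card_common_ancestors a b : #|anc a :&: anc b| = (dist_to_path e r a b).+1.
Proof.
have [p pap] := connectP (econn a b); case: (shortenP pap) => {pap}p pap up _ pb.
have [w wp] := path_low_vertex pap; rewrite -pb => sw.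
have onw : on_path e a b w.
  apply/existsP; exists (Ordinal (size_uniq_path up)); apply/existsP; exists (in_tuple p).
  by apply/and4P; rewrite pb.
have /card_gt0P I_gt0 : exists v, v \in anc a :&: anc b.
  by exists r; rewrite inE !root_ancestors.
apply/eqP; rewrite eqn_leq; apply/andP; split.
  rewrite -(prednK I_gt0) ltnS; apply: (@le_bigmin _ nat).
    exact: leq_trans (leq_pred _) (max_card _).
  move=> v /on_path_ancestors /subset_leq_card.
  by rewrite card_ancestors dist_rootl leEnat; lia.
apply: leq_trans (_ : (dist r w).+1 <= _).
  by rewrite ltnS; apply: (@bigmin_le_cond _ nat).
by rewrite dist_rootl -card_ancestors subset_leq_card.
Qed.

Lemma dist_to_path_sym a b : dist_to_path e r a b = dist_to_path e r b a.
Proof. by apply: succn_inj; rewrite -!card_common_ancestors setIC. Qed.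

Lemma dist_to_path_ancestor u v : u \in anc v -> dist_to_path e r u v = depth u.
Proof.
move=> uv; apply: succn_inj; rewrite -card_common_ancestors -card_ancestors.
suff /setIidPl -> : anc u \subset anc v by [].
by apply/subsetP => c /ancestors_trans; apply.
Qed.

Lemma dist_to_path_dist a b : 2 * dist_to_path e r a b + dist a b = depth a + depth b.
Proof.
have := card_symdiff (anc a) (anc b).
by rewrite -dist_ancestors card_common_ancestors !card_ancestors; lia.
Qed.

Definition anc_comparable a b := (a \in anc b) || (b \in anc a).

Definition strict_common_ancestors a b := (anc a :&: anc b) :\: [set a; b].

Lemma card_strict_common_ancestors a b : a != b ->
  #|strict_common_ancestors a b| = dist_to_path e r a b + ~~ anc_comparable a b.
Proof.
move=> ab; have := card_common_ancestors a b; have := ancestors_asym ab.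
rewrite /strict_common_ancestors (cardsD1 a) (cardsD1 b (_ :\ a)) setDDl /anc_comparable.
rewrite !inE eq_sym (negbTE ab) !ancestors_refl /= andbT.
by case: (a \in anc b); case: (b \in anc a) => //= _; lia.
Qed.

Lemma anc_comparable_depth_inj : injective depth -> forall a b, anc_comparable a b.
Proof.
move=> dinj a b; wlog dab : a b / depth a <= depth b.
  move=> W; case: (leqP (depth a) (depth b)) => [/W //|/ltnW /W].
  by rewrite /anc_comparable orbC.
apply/orP; left; apply/ancestorsP; exists (depth b - depth a).
by apply: dinj; rewrite depth_iter_parent; lia.
Qed.

Lemma depth_inj_anc_comparable : (forall a b, anc_comparable a b) -> injective depth.
Proof.
move=> cmp a b dab; case/orP: (cmp a b) => [ab|ba]; first exact: ancestors_depth_inj.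
by symmetry; apply: (ancestors_depth_inj ba).
Qed.

Lemma edge_depth_inj : injective depth ->
  forall x y, e x y = (depth y == (depth x).+1) || (depth x == (depth y).+1).
Proof.
move=> dinj.
have step x y : depth y = (depth x).+1 -> e x y.
  move=> dy; have yr : y != r by apply: contra_eqN dy => /eqP ->; rewrite depth_root.
  have [eyp dp] := parent_spec yr.
  by rewrite esym -(dinj (parent y) x) //; lia.
move=> x y; apply/idP/orP => [exy|[] /eqP]; last 2 first.
- exact: step.
- by rewrite esym; apply: step.
case: (edge_parent exy) => xy; [left | right]; apply/eqP.
  by rewrite xy (parent_spec (edge_parent_nonroot exy xy)).2.
have xr : x != r by apply: edge_parent_nonroot xy; rewrite esym.
by rewrite xy (parent_spec xr).2.
Qed.

Lemma depth_inj_path_with_end : injective depth -> is_path_with_end e r.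
Proof.
move=> dinj; have depth_lt v : depth v < #|T| := dist_lt_card econn v r.
pose ord_depth v : 'I_#|T| := Ordinal (depth_lt v).
have [g depthK gK] : bijective ord_depth.
  by apply: inj_card_bij; [move=> u v /(congr1 val)/dinj | rewrite card_ord].
pose s := map g (enum 'I_#|T|).
have size_s : size s = #|T| by rewrite size_map size_enum_ord.
have depth_nth i : i < #|T| -> depth (nth r s i) = i.
  move=> lt_iN; have -> : nth r s i = g (Ordinal lt_iN).
    rewrite (nth_map (Ordinal lt_iN)) ?size_enum_ord //.
    by congr g; apply/val_inj/nth_enum_ord.
  by have /(congr1 val) := gK (Ordinal lt_iN).
have nth_depth v : nth r s (depth v) = v.
  by apply: dinj; rewrite depth_nth.
exists s; split.
- apply: uniq_perm; rewrite ?(map_inj_uniq (can_inj gK)) ?enum_uniq // => v.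
  by rewrite mem_enum -(nth_depth v) mem_nth // size_s.
- by rewrite -nth0 -depth_root nth_depth.
move=> x y; rewrite edge_depth_inj //; split.
  case/orP => /eqP dxy; [exists (depth x) | exists (depth y)];
    by rewrite size_s -dxy !nth_depth depth_lt; split; [|by [left|right]].
case=> i [lt_i1 [[<- <-]|[<- <-]]]; rewrite size_s in lt_i1;
  by rewrite !depth_nth ?eqxx ?orbT // ltnW.
Qed.

Lemma path_with_end_depth_inj : is_path_with_end e r -> injective depth.
Proof.
case=> s [ps s_r es].
have s_all v : v \in s by rewrite (perm_mem ps) mem_enum.
have us : uniq s by rewrite (perm_uniq ps) enum_uniq.
have index_edge x y : e x y -> index x s <= (index y s).+1.
  by case/es => i [lt_i1 [[<- <-]|[<- <-]]]; rewrite !index_uniq ?(ltnW lt_i1) //; lia.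
have index_path x p : path e x p -> index x s <= size p + index (last x p) s.
  elim: p x => [|y p IH] x //= /andP[/index_edge exy /IH]; lia.
have index_le_depth v : index v s <= depth v.
  have /walk_lenP [p [sp vp pr]] := (dist_walk econn v r).2.
  have := index_path _ _ vp; rewrite pr /depth -sp.
  by case: s {ps es s_all us index_edge index_path} s_r => //= z s' ->; rewrite eqxx; lia.
have depth_nth_le i : i < size s -> depth (nth r s i) <= i.
  elim: i => [_|i IH lt_i1]; first by rewrite nth0 s_r depth_root.
  have en : e (nth r s i.+1) (nth r s i) by rewrite esym; apply/es; exists i; split; [|left].
  by have := dist_edge econn r en; have := IH (ltnW lt_i1); rewrite /depth; lia.
have depth_index v : depth v = index v s.
  have := depth_nth_le (index v s); rewrite nth_index // index_mem => /(_ (s_all v)).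
  by have := index_le_depth v; lia.
by move=> a b; rewrite !depth_index => /(congr1 (nth r s)); rewrite !nth_index.
Qed.

Lemma path_with_endP : is_path_with_end e r <-> forall a b, anc_comparable a b.
Proof.
split=> [/path_with_end_depth_inj/anc_comparable_depth_inj //|].
by move/depth_inj_anc_comparable/depth_inj_path_with_end.
Qed.

Lemma star_centreP : is_star_centre e r <-> forall v, v != r -> parent v = r.
Proof.
split=> [star v vr | parent_r x y].
  by have [+ _] := parent_spec vr; rewrite star (negbTE vr); case: (parent v =P r).
apply/idP/idP => [exy|].
  case: (edge_parent exy) => xy.
    by rewrite xy parent_r ?eqxx ?(negbTE (edge_parent_nonroot exy xy)).
  have xr : x != r by apply: edge_parent_nonroot xy; rewrite esym.
  by rewrite xy parent_r ?eqxx ?(negbTE xr).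
case: (eqVneq x r) => [->|xr]; case: (eqVneq y r) => [->|yr] //= _.
  by rewrite esym -(parent_r y yr); apply: (parent_spec yr).1.
by rewrite -(parent_r x xr); apply: (parent_spec xr).1.
Qed.

Lemma star_centre_dist_to_path :
  (forall a b, a != b -> dist_to_path e r a b = 0) <-> is_star_centre e r.
Proof.
rewrite star_centreP; split=> [dtp0 v vr | parent_r a b ab].
  have [evp _] := parent_spec vr.
  have pv : parent v \in anc v by rewrite ancestors_parent // in_setU1 ancestors_refl orbT.
  apply: depth_eq0; rewrite -(dist_to_path_ancestor pv) dtp0 //.
  by apply: contraTneq evp => ->; rewrite eirr.
have anc_sub v : anc v \subset [set v; r].
  case: (eqVneq v r) => [->|vr]; first by rewrite ancestors_root subsetUr.
  by rewrite ancestors_parent // parent_r // ancestors_root.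
apply: succn_inj; rewrite -card_common_ancestors.
suff -> : anc a :&: anc b = [set r] by rewrite cards1.
apply/setP => c; rewrite !inE; apply/andP/eqP => [[ca cb]|->]; last by rewrite !root_ancestors.
move: (subsetP (anc_sub a) c ca) (subsetP (anc_sub b) c cb); rewrite !inE.
by case/orP=> [/eqP ac|/eqP //]; case/orP=> [/eqP bc|/eqP //]; move: ab; rewrite -ac -bc eqxx.
Qed.

Definition strict_common_ancestor c a b := [&& c \in anc a, c \in anc b & uniq [:: a; b; c]].

Lemma strict_common_ancestor3_le x y z :
  strict_common_ancestor x y z + strict_common_ancestor y x z + strict_common_ancestor z x y
  <= uniq [:: x; y; z].
Proof.
rewrite /strict_common_ancestor /= !inE !negb_or.
case: (eqVneq x y) => [<-|xy]; first by rewrite /= !andbF.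
case: (eqVneq x z) => [<-|xz]; first by rewrite /= !andbF.
case: (eqVneq y z) => [<-|yz]; first by rewrite /= !andbF.
move: (ancestors_asym xy) (ancestors_asym xz) (ancestors_asym yz).
by case: (x \in anc y); case: (y \in anc x); case: (x \in anc z);
  case: (z \in anc x); case: (y \in anc z); case: (z \in anc y).
Qed.

Lemma strict_common_ancestor3_chain x y z :
  anc_comparable x y -> anc_comparable x z -> anc_comparable y z ->
  strict_common_ancestor x y z + strict_common_ancestor y x z + strict_common_ancestor z x y
  = uniq [:: x; y; z].
Proof.
rewrite /anc_comparable /strict_common_ancestor /= !inE !negb_or.
case: (eqVneq x y) => [<-|xy]; first by rewrite /= !andbF.
case: (eqVneq x z) => [<-|xz]; first by rewrite /= !andbF.
case: (eqVneq y z) => [<-|yz]; first by rewrite /= !andbF.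
have trans u v w : (u \in anc v) && (v \in anc w) ==> (u \in anc w).
  by apply/implyP => /andP[]; apply: ancestors_trans.
move: (ancestors_asym xy) (ancestors_asym xz) (ancestors_asym yz).
move: (trans x y z) (trans x z y) (trans y x z) (trans y z x) (trans z x y) (trans z y x).
by case: (x \in anc y); case: (y \in anc x); case: (x \in anc z);
  case: (z \in anc x); case: (y \in anc z); case: (z \in anc y).
Qed.

Lemma sum_card_strict_common_ancestors :
  \sum_a \sum_(b | a != b) #|strict_common_ancestors a b|
  = \sum_x \sum_y \sum_z strict_common_ancestor x y z.
Proof.
rewrite -sum3_rot; apply: eq_bigr => a _; rewrite big_mkcond; apply: eq_bigr => b _ /=.
case: (eqVneq a b) => [<-|ab].
  by rewrite big1 // => c _; rewrite /strict_common_ancestor /= inE eqxx !andbF.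
rewrite -sum_mem_card; apply: eq_bigr => c _.
rewrite /strict_common_ancestor /= !inE !negb_or (negbTE ab) !(eq_sym c).
by case: (c \in anc a); case: (c \in anc b); case: (a == c); case: (b == c).
Qed.

Lemma sum_strict_common_ancestors_le :
  3 * \sum_a \sum_(b | a != b) #|strict_common_ancestors a b|
  <= #|T| * (#|T| - 1) * (#|T| - 2).
Proof.
rewrite sum_card_strict_common_ancestors -sum3_perm3 -sum_uniq3.
by do 3 (apply: leq_sum => ? _); apply: strict_common_ancestor3_le.
Qed.

Lemma sum_strict_common_ancestors_chain : (forall a b, anc_comparable a b) ->
  3 * \sum_a \sum_(b | a != b) #|strict_common_ancestors a b| = #|T| * (#|T| - 1) * (#|T| - 2).
Proof.
move=> cmp; rewrite sum_card_strict_common_ancestors -sum3_perm3 -sum_uniq3.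
by do 3 (apply: eq_bigr => ? _); apply: strict_common_ancestor3_chain.
Qed.

Lemma sum_dist_to_path_incomparable :
  \sum_a \sum_(b | a != b) dist_to_path e r a b
    + \sum_a \sum_(b | a != b) ~~ anc_comparable a b
  = \sum_a \sum_(b | a != b) #|strict_common_ancestors a b|.
Proof.
rewrite -big_split; apply: eq_bigr => a _; rewrite -big_split; apply: eq_bigr => b ab.
by rewrite card_strict_common_ancestors.
Qed.

Lemma sum_dist_to_path_le :
  3 * \sum_a \sum_(b | a != b) dist_to_path e r a b <= #|T| * (#|T| - 1) * (#|T| - 2).
Proof.
apply: leq_trans sum_strict_common_ancestors_le.
by rewrite -sum_dist_to_path_incomparable leq_mul2l leq_addr.
Qed.

Lemma sum_dist_to_path_eq :
  3 * \sum_a \sum_(b | a != b) dist_to_path e r a b = #|T| * (#|T| - 1) * (#|T| - 2)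
  <-> is_path_with_end e r.
Proof.
rewrite path_with_endP; split=> [heq a b | cmp].
  have := sum_strict_common_ancestors_le; rewrite -sum_dist_to_path_incomparable.
  rewrite -{}heq mulnDr -{2}[3 * _]addn0 leq_add2l leqn0 muln_eq0 /= => /eqP.
  move/sum_offdiag_eq0 => incmp; case: (eqVneq a b) => [->|ab].
    by rewrite /anc_comparable ancestors_refl.
  by apply/negPn/negP => /negbTE nab; have := incmp a b ab; rewrite nab.
rewrite -(sum_strict_common_ancestors_chain cmp) -sum_dist_to_path_incomparable.
by rewrite [X in _ + X]big1 ?addn0 // => a _; rewrite big1 // => b _; rewrite cmp.
Qed.

Lemma sum_dist_to_path_eq0 :
  \sum_a \sum_(b | a != b) dist_to_path e r a b = 0 <-> is_star_centre e r.
Proof. by rewrite sum_offdiag_eq0 star_centre_dist_to_path. Qed.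

Lemma sum_dist_to_path_dist :
  2 * \sum_a \sum_(b | a != b) dist_to_path e r a b + \sum_a \sum_b dist a b
  = 2 * (#|T| - 1) * \sum_a depth a.
Proof.
have diag a : \sum_b dist_to_path e r a b = depth a + \sum_(b | a != b) dist_to_path e r a b.
  rewrite (bigD1 a) //= dist_to_path_ancestor ?ancestors_refl //.
  by congr (_ + _); apply: eq_bigl => b; rewrite eq_sym.
have total : \sum_a \sum_b (2 * dist_to_path e r a b + dist a b) = 2 * #|T| * \sum_a depth a.
  under eq_bigr do under eq_bigr do rewrite dist_to_path_dist.
  under eq_bigr do rewrite big_split /= sum_nat_const.
  rewrite big_split /= sum_nat_const -big_distrr /= (eq_card (B := T)) //.
  by rewrite mul2n -addnn mulnDl.
move: total; under eq_bigr do rewrite big_split /= -big_distrr /= diag.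
rewrite big_split /= -big_distrr /= big_split /=.
set S := \sum_a depth a; set D := \sum_a \sum_(b | a != b) _; set W := \sum_a \sum_b dist a b.
by rewrite mulnBr muln1 mulnBl; lia.
Qed.

End RootedTree.

Local Open Scope ring_scope.

Lemma Rval_dist_to_path n (e : rel 'I_n) (r : 'I_n) :
  symmetric e -> irreflexive e -> is_tree e ->
  Rval e r = (2 * \sum_a \sum_(b | a != b) dist_to_path e r a b)%N%:Z.
Proof.
move=> esym eirr etree; rewrite /Rval -PoszM.
have := sum_dist_to_path_dist esym eirr etree r; rewrite card_ord /depth => <-.
by rewrite PoszD addrK.
Qed.

Theorem proposition2p8 (n : nat) (hn : (0 < n)%N) (e : rel 'I_n)
  (esym : symmetric e) (eirr : irreflexive e) (etree : is_tree e) :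
  let r : 'I_n := Ordinal hn in
  [/\ Rval e r = 4%:Z * (\sum_(a : 'I_n) \sum_(b : 'I_n | (a < b)%N)
                            dist_to_path e r a b)%N%:Z,
      0 <= Rval e r,
      3%:Z * Rval e r <= (2 * n * (n - 1) * (n - 2))%N%:Z,
      (3%:Z * Rval e r = (2 * n * (n - 1) * (n - 2))%N%:Z <-> is_path_with_end e r)
    & (Rval e r = 0 <-> is_star_centre e r)].
Proof.
move=> r; rewrite Rval_dist_to_path //.
rewrite (sum_pairs_ord (dist_to_path_sym esym eirr etree r)).
have le3 := sum_dist_to_path_le esym eirr etree r.
have eq3 := sum_dist_to_path_eq esym eirr etree r.
have eq0 := sum_dist_to_path_eq0 esym eirr etree r.
rewrite card_ord in le3 eq3.
rewrite (sum_pairs_ord (dist_to_path_sym esym eirr etree r)) in le3 eq3 eq0.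
set t := \sum_(a < n) \sum_(b < n | (a < b)%N) _ in le3 eq3 eq0 *.
have Posz_eq m k : (m%:Z = k%:Z) <-> m = k by split=> [[]|->].
rewrite -!PoszM lez_nat -!mulnA in le3 eq3 *; split.
- by rewrite mulnA.
- by [].
- lia.
- by rewrite Posz_eq -eq3; split; lia.
- by rewrite Posz_eq -eq0; split; lia.
Qed.
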